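(* Fix $0<d<1$ and let $c(x)=x^d$. For any game with $n$ jobs and cost function $c$, any Nash equilibrium $s$ and any optimal assignment $s^*$, we have $\frac{C(s)}{C(s^* )}=O\!\left(n^{\frac{1-d}{2}}\right)$.
   Context: A game is specified by a cost function $c$ (here $c(x)=x^d$, $c(0)=0$), a time horizon $T$ with slots $t=1,\dots,T$, and a set of $n$ jobs, each job $j$ having integer release time $r_j$ and integer deadline $d_j$ with $0<r_j<d_j<T$. An assignment $s$ gives each job $j$ a slot $s_j$ with $r_j\le s_j<d_j$. The load of slot $t$ is $l_t(s)=|\{j:s_j=t\}|$ and $C(s)=\sum_{t=1}^T c(l_t(s))$. An assignment $s$ is a Nash equilibrium if for every job $j$ and every slot $t\neq s_j$ with $r_j\le t<d_j$: $\frac{c(l_{s_j}(s))}{l_{s_j}(s)}\le\frac{c(l_t(s)+1)}{l_t(s)+1}$. An optimal assignment is one minimizing $C$ over all assignments. *)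

(* concrete reals R, jobs indexed 0..n-1, slots 1..T. *)
From Stdlib Require Import Reals Lra Lia List Arith.
Import ListNotations.
Open Scope R_scope.

Definition cost (d : R) (x : nat) : R :=
  match x with
  | O => 0
  | _ => Rpower (INR x) d
  end.

Definition valid_game (T n : nat) (r dl : nat -> nat) : Prop :=
  forall j, (j < n)%nat -> (0 < r j)%nat /\ (r j < dl j)%nat /\ (dl j < T)%nat.

Definition assignment (n : nat) (r dl : nat -> nat) (s : nat -> nat) : Prop :=
  forall j, (j < n)%nat -> (r j <= s j)%nat /\ (s j < dl j)%nat.

Definition load (n : nat) (s : nat -> nat) (t : nat) : nat :=
  length (filter (fun j => Nat.eqb (s j) t) (seq 0 n)).

Definition total_cost (d : R) (T n : nat) (s : nat -> nat) : R :=
  fold_right Rplus 0 (map (fun t => cost d (load n s t)) (seq 1 T)).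

Definition nash_eq (d : R) (n : nat) (r dl : nat -> nat) (s : nat -> nat) : Prop :=
  assignment n r dl s /\
  forall j t, (j < n)%nat -> t <> s j -> (r j <= t)%nat -> (t < dl j)%nat ->
    cost d (load n s (s j)) / INR (load n s (s j))
      <= cost d (load n s t + 1) / INR (load n s t + 1).

Definition optimal (d : R) (T n : nat) (r dl : nat -> nat) (s : nat -> nat) : Prop :=
  assignment n r dl s /\
  forall s', assignment n r dl s' -> total_cost d T n s <= total_cost d T n s'.

From Stdlib Require Import Reals Lra Lia List Bool.
Open Scope R_scope.

(* Charge each job the per-unit cost c(l)/l = l^(d-1) of its slot, so that C(s) is the sum of these
   shares.  Fix a slot u of the optimum carrying m jobs.  Those of its jobs whose Nash slot has
   load at least sqrt m pay at most m^((d-1)/2) each.  The others sit in light slots (load below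
   sqrt m); the Nash condition makes loads strictly decrease from such a slot towards u, so the
   light slots hosting them have pairwise distinct loads on each side of u: there are at most
   2 sqrt m + 1 of them, each of total cost at most m^(d/2).  Hence the jobs of u pay at most
   4 m^((d+1)/2) = 4 c(m) m^((1-d)/2) <= 4 c(m) n^((1-d)/2), and summing over u gives
   C(s) <= 4 n^((1-d)/2) C(s_opt). *)

Definition sumR (f : nat -> R) (L : list nat) : R := fold_right Rplus 0 (map f L).

Lemma sumR_cons f a L : sumR f (a :: L) = f a + sumR f L.
Proof. reflexivity. Qed.

Lemma sumR_le f g L : (forall x, In x L -> f x <= g x) -> sumR f L <= sumR g L.
Proof.
  induction L as [|a L IH]; intros H; unfold sumR in *; simpl; [lra|].
  assert (f a <= g a) by (apply H; left; reflexivity).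
  assert (fold_right Rplus 0 (map f L) <= fold_right Rplus 0 (map g L))
    by (apply IH; intros; apply H; right; assumption).
  lra.
Qed.

Lemma sumR_ext f g L : (forall x, In x L -> f x = g x) -> sumR f L = sumR g L.
Proof.
  intros H; apply Rle_antisym; apply sumR_le; intros x Hx; rewrite H by assumption; lra.
Qed.

Lemma sumR_zero f L : (forall x, In x L -> f x = 0) -> sumR f L = 0.
Proof.
  intros H; rewrite (sumR_ext f (fun _ => 0)) by assumption; clear H.
  induction L as [|a L IH]; unfold sumR in *; simpl; [reflexivity|]. rewrite IH; ring.
Qed.

Lemma sumR_plus f g L : sumR (fun x => f x + g x) L = sumR f L + sumR g L.
Proof. induction L as [|a L IH]; unfold sumR in *; simpl; [ring|]. rewrite IH; ring. Qed.

Lemma sumR_scal_l c f L : sumR (fun x => c * f x) L = c * sumR f L.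
Proof. induction L as [|a L IH]; unfold sumR in *; simpl; [ring|]. rewrite IH; ring. Qed.

Lemma sumR_if_const (P : nat -> bool) c L :
  sumR (fun x => if P x then c else 0) L = INR (length (filter P L)) * c.
Proof.
  induction L as [|a L IH]; unfold sumR in *; simpl; [ring|].
  destruct (P a); simpl length; rewrite IH, ?S_INR; ring.
Qed.

Lemma sumR_fiber (g : nat -> nat) (G : nat -> R) t L :
  sumR (fun j => if g j =? t then G (g j) else 0) L
  = INR (length (filter (fun j => g j =? t) L)) * G t.
Proof.
  rewrite <- sumR_if_const; apply sumR_ext; intros j _.
  destruct (Nat.eqb_spec (g j) t) as [->|_]; reflexivity.
Qed.

Lemma sumR_indicator c x L : NoDup L -> In x L -> sumR (fun t => if x =? t then c else 0) L = c.
Proof.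
  induction L as [|a L IH]; intros HL Hx; [destruct Hx|].
  inversion HL as [|? ? HaL HL']; subst; rewrite sumR_cons.
  destruct (Nat.eqb_spec x a) as [->|Hxa].
  - rewrite (sumR_zero _ L); [ring|].
    intros t Ht; destruct (Nat.eqb_spec a t); [subst; contradiction|reflexivity].
  - destruct Hx as [->|Hx]; [contradiction|]. rewrite IH by assumption; ring.
Qed.

Lemma sumR_partition (F : nat -> R) (g : nat -> nat) L L' :
  NoDup L' -> (forall j, In j L -> In (g j) L') ->
  sumR F L = sumR (fun t => sumR (fun j => if g j =? t then F j else 0) L) L'.
Proof.
  intros HL' Hg; induction L as [|a L IH].
  - symmetry; apply sumR_zero; reflexivity.
  - rewrite sumR_cons, IH by (intros j Hj; apply Hg; right; exact Hj).
    rewrite <- (sumR_indicator (F a) (g a) L') at 1 by (auto; apply Hg; left; reflexivity).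
    rewrite <- sumR_plus; apply sumR_ext; reflexivity.
Qed.

Lemma NoDup_length_le_inj (L : list nat) (g : nat -> nat) b :
  NoDup L -> (forall x, In x L -> (g x < b)%nat) ->
  (forall x y, In x L -> In y L -> g x = g y -> x = y) -> (length L <= b)%nat.
Proof.
  intros HL Hb Hinj. rewrite <- (length_map g L), <- (length_seq b 0).
  apply NoDup_incl_length.
  - apply NoDup_map_NoDup_ForallPairs; [intros x y Hx Hy; apply Hinj; assumption | exact HL].
  - intros k Hk; apply in_map_iff in Hk as [x [<- Hx]]; apply in_seq; specialize (Hb x Hx); lia.
Qed.

Definition decreasing_towards (S : list nat) (f : nat -> nat) (u : nat) : Prop :=
  forall x y, In x S -> In y S -> (x < y <= u \/ u <= y < x)%nat -> (f y < f x)%nat.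

Lemma valley_length_le (S : list nat) (f : nat -> nat) u k :
  NoDup S -> (forall x, In x S -> x <> u -> (0 < f x <= k)%nat) ->
  decreasing_towards S f u -> (length S <= 2 * k + 1)%nat.
Proof.
  intros HS Hf Hval.
  set (code t := if t =? u then 0%nat else (2 * f t - (if t <? u then 1 else 0))%nat).
  apply (NoDup_length_le_inj S code); [exact HS | |].
  - intros x Hx; unfold code.
    destruct (Nat.eqb_spec x u) as [|Hxu]; [lia|]. specialize (Hf x Hx Hxu).
    destruct (x <? u); lia.
  - intros x y Hx Hy; unfold code.
    pose proof (Hval x y Hx Hy); pose proof (Hval y x Hy Hx).
    destruct (Nat.eqb_spec x u) as [|Hxu], (Nat.eqb_spec y u) as [|Hyu];
      try pose proof (Hf x Hx Hxu); try pose proof (Hf y Hy Hyu);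
      destruct (Nat.ltb_spec x u), (Nat.ltb_spec y u); lia.
Qed.

Lemma Rpower_pos x a : 0 < Rpower x a.
Proof. apply exp_pos. Qed.

Lemma Rpower_le_antitone a b c : c <= 0 -> 0 < a <= b -> Rpower b c <= Rpower a c.
Proof.
  intros Hc Hab. rewrite <- (Ropp_involutive c), (Rpower_Ropp a), (Rpower_Ropp b).
  apply Rinv_le_contravar; [apply Rpower_pos | apply Rle_Rpower_l; lra].
Qed.

Lemma Rpower_lt_antitone a b c : c < 0 -> 0 < a < b -> Rpower b c < Rpower a c.
Proof.
  intros Hc Hab. rewrite <- (Ropp_involutive c), (Rpower_Ropp a), (Rpower_Ropp b).
  apply Rinv_lt_contravar; [apply Rmult_lt_0_compat; apply Rpower_pos | apply Rlt_Rpower_l; lra].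
Qed.

Lemma Rpower_sqr x a : 0 < x -> Rpower (x * x) (a / 2) = Rpower x a.
Proof.
  intros Hx. rewrite <- Rpower_mult_distr, <- Rpower_plus by assumption. f_equal; field.
Qed.

Lemma cost_nonneg d k : 0 <= cost d k.
Proof. destruct k; [apply Rle_refl | apply Rlt_le, Rpower_pos]. Qed.

Lemma cost_div_INR d k : (1 <= k)%nat -> cost d k / INR k = Rpower (INR k) (d - 1).
Proof.
  intros Hk. destruct k as [|k]; [lia|]. unfold cost. fold (INR (S k)).
  assert (0 < INR (S k)) by (apply lt_0_INR; lia).
  replace (d - 1) with (d + - (1)) by ring.
  rewrite Rpower_plus, Rpower_Ropp, Rpower_1 by assumption; reflexivity.
Qed.

Lemma cost_div_nonneg d k : 0 <= cost d k / INR k.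
Proof.
  destruct k as [|k].
  - simpl; unfold Rdiv; rewrite Rmult_0_l; apply Rle_refl.
  - rewrite cost_div_INR by lia; apply Rlt_le, Rpower_pos.
Qed.

Lemma cost_div_lt d a b : d < 1 -> (1 <= a < b)%nat -> cost d b / INR b < cost d a / INR a.
Proof.
  intros Hd Hab. rewrite !cost_div_INR by lia.
  apply Rpower_lt_antitone; [lra | split; [apply lt_0_INR | apply lt_INR]; lia].
Qed.

Lemma cost_div_le_of_sqr_ge d k m : d <= 1 -> (1 <= m <= k * k)%nat ->
  cost d k / INR k <= Rpower (INR m) ((d - 1) / 2).
Proof.
  intros Hd Hm. assert (Hk : (1 <= k)%nat) by nia.
  rewrite cost_div_INR, <- (Rpower_sqr (INR k)) by (auto; apply lt_0_INR; lia).
  apply Rpower_le_antitone; [lra|]. split; [apply lt_0_INR; lia | rewrite <- mult_INR; apply le_INR; lia].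
Qed.

Lemma cost_le_of_sqr_le d k m : 0 < d -> (k * k <= m)%nat -> cost d k <= Rpower (INR m) (d / 2).
Proof.
  intros Hd Hkm. destruct k as [|k]; [apply Rlt_le, Rpower_pos|].
  unfold cost; fold (INR (S k)). rewrite <- Rpower_sqr by (apply lt_0_INR; lia).
  apply Rle_Rpower_l; [lra|]. split; [apply Rmult_lt_0_compat; apply lt_0_INR; lia|].
  rewrite <- mult_INR; apply le_INR; exact Hkm.
Qed.

Lemma INR_sqrt_le m : INR (Nat.sqrt m) <= sqrt (INR m).
Proof.
  rewrite <- (sqrt_square (INR (Nat.sqrt m))) by apply pos_INR.
  apply sqrt_le_1_alt. rewrite <- mult_INR. apply le_INR, Nat.sqrt_spec; lia.
Qed.

Lemma heavy_light_total_le d m c : (1 <= m)%nat -> (c <= 2 * Nat.sqrt m + 1)%nat ->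
  INR m * Rpower (INR m) ((d - 1) / 2) + INR c * Rpower (INR m) (d / 2)
  <= 4 * cost d m * Rpower (INR m) ((1 - d) / 2).
Proof.
  intros Hm Hc. set (x := INR m).
  assert (Hx : 1 <= x) by (apply (le_INR 1); exact Hm).
  assert (Hcost : cost d m = Rpower x d) by (destruct m; [lia | reflexivity]).
  assert (Hheavy : x * Rpower x ((d - 1) / 2) = Rpower x d * Rpower x ((1 - d) / 2)).
  { rewrite <- (Rpower_1 x) at 1 by lra. rewrite <- !Rpower_plus. f_equal; field. }
  assert (Hlight : sqrt x * Rpower x (d / 2) = Rpower x d * Rpower x ((1 - d) / 2)).
  { rewrite <- Rpower_sqrt, <- !Rpower_plus by lra. f_equal; field. }
  assert (Hsqrt1 : 1 <= sqrt x) by (rewrite <- sqrt_1; apply sqrt_le_1_alt; exact Hx).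
  assert (Hcount : INR c <= 3 * sqrt x).
  { apply le_INR in Hc. rewrite plus_INR, mult_INR in Hc. simpl INR in Hc.
    pose proof (INR_sqrt_le m) as Hsqrt; fold x in Hsqrt. lra. }
  pose proof (Rpower_pos x (d / 2)).
  assert (INR c * Rpower x (d / 2) <= 3 * sqrt x * Rpower x (d / 2))
    by (apply Rmult_le_compat_r; lra).
  rewrite Hcost; lra.
Qed.

Section NashVersusOptimum.

Variables (d : R) (T n : nat) (r dl : nat -> nat).

Definition cost_share (f : nat -> nat) (t : nat) : R := cost d (load n f t) / INR (load n f t).

Lemma load_mul_cost_share f t : INR (load n f t) * cost_share f t = cost d (load n f t).
Proof.
  unfold cost_share; destruct (load n f t) as [|k].
  - simpl; ring.
  - field; apply not_0_INR; lia.
Qed.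

Lemma load_le f t : (load n f t <= n)%nat.
Proof. unfold load. rewrite <- (length_seq n 0) at 2. apply filter_length_le. Qed.

Lemma load_pos f j : (j < n)%nat -> (1 <= load n f (f j))%nat.
Proof.
  intros Hj. unfold load.
  assert (Hin : In j (filter (fun i => f i =? f j) (seq 0 n)))
    by (apply filter_In; split; [apply in_seq; lia | apply Nat.eqb_refl]).
  destruct (filter _ _); [destruct Hin | simpl; lia].
Qed.

Lemma cost_mul_Rpower_load_le f t a : 0 <= a ->
  cost d (load n f t) * Rpower (INR (load n f t)) a <= Rpower (INR n) a * cost d (load n f t).
Proof.
  intros Ha. rewrite Rmult_comm. destruct (load n f t) as [|k] eqn:Hk; [simpl; lra|].
  apply Rmult_le_compat_r; [apply cost_nonneg|]. apply Rle_Rpower_l; [exact Ha|].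
  split; [apply lt_0_INR; lia | rewrite <- Hk; apply le_INR, load_le].
Qed.

Hypothesis Hgame : valid_game T n r dl.

Lemma sumR_group_by_slot f F : assignment n r dl f ->
  sumR F (seq 0 n) = sumR (fun t => sumR (fun j => if f j =? t then F j else 0) (seq 0 n)) (seq 1 T).
Proof.
  intros Hf. apply sumR_partition; [apply seq_NoDup|]. intros j Hj. apply in_seq in Hj.
  destruct (Hgame j ltac:(lia)) as [? [? ?]], (Hf j ltac:(lia)). apply in_seq; lia.
Qed.

Lemma total_cost_shares f : assignment n r dl f ->
  total_cost d T n f = sumR (fun j => cost_share f (f j)) (seq 0 n).
Proof.
  intros Hf. rewrite (sumR_group_by_slot f) by exact Hf. apply sumR_ext; intros t _.
  rewrite (sumR_fiber f (cost_share f)). apply eq_sym, load_mul_cost_share.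
Qed.

Variables (s sopt : nat -> nat).
Hypotheses (hd0 : 0 < d) (hd1 : d < 1).
Hypotheses (Hnash : nash_eq d n r dl s) (Hopt : assignment n r dl sopt).

Lemma nash_load_lt j t : (j < n)%nat -> t <> s j -> (r j <= t < dl j)%nat ->
  (load n s t < load n s (s j))%nat.
Proof.
  intros Hj Ht Hwin. pose proof (proj2 Hnash j t Hj Ht (proj1 Hwin) (proj2 Hwin)) as Hle.
  pose proof (load_pos s j Hj).
  destruct (Nat.lt_ge_cases (load n s t) (load n s (s j))) as [|Hge]; [assumption|].
  exfalso. pose proof (cost_div_lt d (load n s (s j)) (load n s t + 1) hd1 ltac:(lia)). lra.
Qed.

Definition light (m t : nat) : bool := load n s t * load n s t <? m.

Definition hosts (u t : nat) : bool := existsb (fun j => (s j =? t) && (sopt j =? u)) (seq 0 n).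

Lemma hostsP u t : hosts u t = true <-> exists j, (j < n)%nat /\ s j = t /\ sopt j = u.
Proof.
  unfold hosts; rewrite existsb_exists; split.
  - intros [j [Hj Hst]]. apply in_seq in Hj. apply andb_true_iff in Hst as [Hs Hu].
    apply Nat.eqb_eq in Hs, Hu. exists j; repeat split; [lia | assumption | assumption].
  - intros [j [Hj [Hs Hu]]]. exists j; split; [apply in_seq; lia|].
    apply andb_true_iff; split; apply Nat.eqb_eq; assumption.
Qed.

(* A job at [t] that the optimum puts at [u] may move to any slot between them. *)
Lemma hosts_load_lt u t y : hosts u t = true -> (t < y <= u \/ u <= y < t)%nat ->
  (load n s y < load n s t)%nat.
Proof.
  intros Hh Hy. apply hostsP in Hh as [j [Hj [<- <-]]].
  destruct (proj1 Hnash j Hj), (Hopt j Hj). apply nash_load_lt; [exact Hj | lia | lia].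
Qed.

Lemma light_hosts_count m u :
  (length (filter (fun t => light m t && hosts u t) (seq 1 T)) <= 2 * Nat.sqrt m + 1)%nat.
Proof.
  apply (valley_length_le _ (load n s) u); [apply NoDup_filter, seq_NoDup | |].
  - intros x Hx _. apply filter_In in Hx as [_ Hx]. apply andb_true_iff in Hx as [Hl Hh].
    apply Nat.ltb_lt in Hl. split.
    + apply hostsP in Hh as [j [Hj [<- _]]]. apply load_pos; exact Hj.
    + apply Nat.sqrt_le_square; lia.
  - intros x y Hx _ Hxy. apply filter_In in Hx as [_ Hx]. apply andb_true_iff in Hx as [_ Hh].
    apply (hosts_load_lt u); assumption.
Qed.

Lemma light_shares_le m u :
  sumR (fun j => if (sopt j =? u) && light m (s j) then cost_share s (s j) else 0) (seq 0 n)
  <= INR (length (filter (fun t => light m t && hosts u t) (seq 1 T))) * Rpower (INR m) (d / 2).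
Proof.
  rewrite (sumR_group_by_slot s) by apply Hnash. rewrite <- sumR_if_const.
  apply sumR_le; intros t _.
  set (G t := if light m t && hosts u t then cost_share s t else 0).
  apply Rle_trans with (sumR (fun j => if s j =? t then G (s j) else 0) (seq 0 n)).
  - apply sumR_le; intros j Hj. apply in_seq in Hj.
    destruct (Nat.eqb_spec (s j) t) as [<-|_]; [|apply Rle_refl].
    assert (Hhost : (sopt j =? u) = true -> hosts u (s j) = true)
      by (intros Hu; apply hostsP; exists j; repeat split; [lia | apply Nat.eqb_eq; exact Hu]).
    pose proof (cost_div_nonneg d (load n s (s j))).
    unfold G, cost_share in *; destruct (sopt j =? u), (light m (s j)), (hosts u (s j));
      simpl; lra.
  - rewrite sumR_fiber. fold (load n s t). unfold G.
    destruct (light m t) eqn:Hl, (hosts u t); simpl; try (rewrite Rmult_0_r; apply Rle_refl).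
    rewrite load_mul_cost_share. apply cost_le_of_sqr_le; [exact hd0|].
    apply Nat.ltb_lt in Hl; lia.
Qed.

Lemma optimal_slot_shares_le u :
  sumR (fun j => if sopt j =? u then cost_share s (s j) else 0) (seq 0 n)
  <= 4 * cost d (load n sopt u) * Rpower (INR (load n sopt u)) ((1 - d) / 2).
Proof.
  set (m := load n sopt u).
  destruct (Nat.eq_dec m 0) as [Hm0|Hm].
  - rewrite sumR_zero, Hm0; [simpl; lra|].
    intros j Hj; apply in_seq in Hj. destruct (Nat.eqb_spec (sopt j) u) as [<-|]; [|reflexivity].
    pose proof (load_pos sopt j ltac:(lia)) as Hpos; fold m in Hpos; lia.
  - set (q := Rpower (INR m) ((d - 1) / 2)).
    apply Rle_trans with (sumR (fun j => (if sopt j =? u then q else 0)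
       + (if (sopt j =? u) && light m (s j) then cost_share s (s j) else 0)) (seq 0 n)).
    + apply sumR_le; intros j Hj; apply in_seq in Hj.
      pose proof (Rpower_pos (INR m) ((d - 1) / 2)) as Hq; fold q in Hq.
      pose proof (cost_div_nonneg d (load n s (s j))).
      destruct (sopt j =? u); simpl; [|lra]. unfold cost_share.
      destruct (light m (s j)) eqn:Hl; [lra|].
      apply Nat.ltb_ge in Hl.
      pose proof (cost_div_le_of_sqr_ge d (load n s (s j)) m ltac:(lra) ltac:(lia)) as Hheavy.
      fold q in Hheavy; lra.
    + rewrite sumR_plus, sumR_if_const. fold (load n sopt u); fold m.
      pose proof (light_shares_le m u). unfold q.
      pose proof (heavy_light_total_le d m _ ltac:(lia) (light_hosts_count m u)). lra.
Qed.

End NashVersusOptimum.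

Theorem lemma1 (d : R) (hd0 : 0 < d) (hd1 : d < 1) :
  exists K : R, 0 < K /\
    forall (T n : nat) (r dl : nat -> nat) (s sopt : nat -> nat),
      valid_game T n r dl ->
      nash_eq d n r dl s ->
      optimal d T n r dl sopt ->
      total_cost d T n s <= K * Rpower (INR n) ((1 - d) / 2) * total_cost d T n sopt.
Proof.
  exists 4. split; [lra|]. intros T n r dl s sopt Hgame Hnash [Hopt _].
  rewrite (total_cost_shares d T n r dl Hgame s (proj1 Hnash)).
  rewrite (sumR_group_by_slot T n r dl Hgame sopt) by exact Hopt.
  unfold total_cost; fold (sumR (fun u => cost d (load n sopt u)) (seq 1 T)).
  rewrite <- sumR_scal_l. apply sumR_le; intros u _.
  eapply Rle_trans; [apply (optimal_slot_shares_le d T n r dl Hgame s sopt); assumption|].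
  pose proof (cost_mul_Rpower_load_le d n sopt u ((1 - d) / 2) ltac:(lra)). lra.
Qed.
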